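(* For every $M\geq 1$, $$g(M)=\sum_{0\leq 2n\leq M-1}(M-2n)\binom{M-n-1}{n}.$$
   Context: The perimeter of a nonempty partition $\lambda$ with largest part $\lambda_1$ and $\ell(\lambda)$ parts is $\lambda_1+\ell(\lambda)-1$. $g(M)$ is the total number of parts, summed over all partitions into odd parts with perimeter $M$. *)

From mathcomp Require Import all_boot.
Set Implicit Arguments. Unset Strict Implicit. Unset Printing Implicit Defensive.

Definition is_partition (s : seq nat) : bool :=
  sorted geq s && all (fun x => 0 < x) s.

Definition odd_parts (s : seq nat) : bool := all odd s.

Definition perimeter (s : seq nat) : nat := head 0 s + size s - 1.

Fixpoint seqs_len (M k : nat) : seq (seq nat) :=
  match k with
  | 0 => [:: [::]]
  | k'.+1 => [seq x :: t | x <- iota 1 M, t <- seqs_len M k']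
  end.

(* Candidate sequences: length between 1 and M, entries in {1..M}.  Any nonempty
   partition of perimeter M has largest part <= M and at most M parts, so it
   occurs (exactly once) in this list. *)
Definition candidates (M : nat) : seq (seq nat) :=
  flatten [seq seqs_len M k | k <- iota 1 M].

Definition odd_partitions_perimeter (M : nat) : seq (seq nat) :=
  [seq s <- candidates M |
     [&& is_partition s, s != [::], odd_parts s & perimeter s == M]].

Definition g (M : nat) : nat :=
  \sum_(s <- odd_partitions_perimeter M) size s.

From mathcomp Require Import all_boot.
From mathcomp Require Import zify.

(* A partition into odd parts of perimeter M with k + 1 parts has largest part
   M - k, which must be odd, followed by a weakly decreasing sequence of k odd
   parts at most M - k.  Such a tail is a multiset of size k drawn from the
   (M - k + 1)/2 odd numbers up to M - k, so there are
   'C(k + (M - k - 1)/2, k) of them.  Weighting by the k + 1 parts and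
   substituting M - k - 1 = 2n gives the formula. *)

Definition odd_tails (M k x : nat) : nat :=
  count (fun t => path geq x t && all odd t) (seqs_len M k).

Lemma odd_tailsS M k x :
  odd_tails M k.+1 x = \sum_(y <- iota 1 M | (y <= x) && odd y) odd_tails M k y.
Proof.
rewrite /odd_tails -sum1_count big_mkcond big_allpairs_dep [RHS]big_mkcond /=.
apply: eq_bigr => y _.
case: (y <= x) => /=; last by rewrite big1.
case: (odd y) => /=; last by rewrite big1 // => t; rewrite andbF.
by rewrite -sum1_count [RHS]big_mkcond.
Qed.

(* With y = 2j + 1, j <= x/2, this is the hockey-stick identity. *)
Lemma odd_hockey_stick k x :
  \sum_(1 <= y < x.+2 | odd y) 'C(k + y.-1./2, k) = 'C(k.+1 + x./2, k.+1).
Proof.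
elim: x => [|x IH]; first by rewrite big_mkcond big_nat1 /= !addn0 !binn.
rewrite big_mkcond big_nat_recr //= -big_mkcond IH /= negbK uphalf_half.
case: (odd x) => /=; last by rewrite add0n addn0.
by rewrite -[k.+1 + (1 + _)]/((k + (1 + x./2)).+1) binS addnA addn1 addSn.
Qed.

Lemma odd_tailsE M k x : 0 < x <= M -> odd_tails M k x = 'C(k + x.-1./2, k).
Proof.
elim: k x => [|k IH] [|x] // x_bound; first by rewrite bin0.
rewrite odd_tailsS.
have -> : iota 1 M = index_iota 1 M.+1 by rewrite /index_iota subSS subn0.
rewrite -odd_hockey_stick (big_cat_nat _ (n := x.+2)) //=.
rewrite [X in _ + X]big1_seq ?addn0 => [|y /andP [/andP [y_le _]]]; last first.
  by rewrite mem_index_iota; lia.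
rewrite big_mkcond [RHS]big_mkcond; apply: eq_big_nat => y /andP [y_ge y_lt].
have -> : y <= x.+1 by lia.
by case: (odd y) => //; rewrite IH //; lia.
Qed.

Lemma seqs_len_shape {M k} (t : seq nat) :
  t \in seqs_len M k -> size t = k /\ all (fun x => 0 < x) t.
Proof.
elim: k t => [|k IH] t /=; first by rewrite inE => /eqP ->.
case/allpairsP => [[x u] [/= x_in u_in ->]] /=.
case: (IH u u_in) => -> ->; rewrite mem_iota in x_in.
by split; lia.
Qed.

Definition odd_perimeter_partition (M : nat) (s : seq nat) : bool :=
  [&& is_partition s, s != [::], odd_parts s & perimeter s == M].

Lemma odd_perimeter_partition_cons {M k} x {t} : t \in seqs_len M k -> 0 < x ->
  odd_perimeter_partition M (x :: t) = [&& x + k == M, odd x, path geq x t & all odd t].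
Proof.
case/seqs_len_shape => size_t pos_t x_pos.
rewrite /odd_perimeter_partition /is_partition /odd_parts /perimeter /=.
rewrite size_t pos_t x_pos addnS subn1 /=.
by case: (x + k == M); case: (odd x); rewrite ?andbT ?andbF.
Qed.

Lemma sum_size_odd_perimeter_partitions_of_size M k : k < M ->
  \sum_(s <- seqs_len M k.+1 | odd_perimeter_partition M s) size s
  = if odd (M - k) then k.+1 * 'C(k + (M - k).-1./2, k) else 0.
Proof.
move=> k_lt_M.
rewrite big_mkcond big_allpairs_dep -/(seqs_len M k).
have M_k_in : M - k \in iota 1 M by rewrite mem_iota; lia.
rewrite (bigD1_seq (M - k)) ?iota_uniq //= [X in _ + X]big1_seq ?addn0; last first.
  move=> x /andP [x_neq x_in]; rewrite big_seq; apply: big1 => t t_in.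
  rewrite (odd_perimeter_partition_cons x t_in); last by move: x_in; rewrite mem_iota; lia.
  by have -> : (x + k == M) = false by apply/eqP; move/eqP: x_neq; lia.
rewrite big_seq (eq_bigr (fun t => if odd (M - k) && (path geq (M - k) t && all odd t)
                                   then k.+1 else 0)) => [|t t_in]; last first.
  rewrite (odd_perimeter_partition_cons _ t_in) ?subnK; try lia.
  by rewrite eqxx (seqs_len_shape _ t_in).1.
rewrite -big_seq; case: (odd (M - k)); last by rewrite big1.
by rewrite -big_mkcond big_const_seq iter_addn_0 -(odd_tailsE M k) //; lia.
Qed.

Lemma g_sum_over_sizes M : g M =
  \sum_(0 <= k < M) (if odd (M - k) then k.+1 * 'C(k + (M - k).-1./2, k) else 0).
Proof.
rewrite /g /odd_partitions_perimeter big_filter /candidates big_flatten big_map.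
have -> : iota 1 M = index_iota 1 M.+1 by rewrite /index_iota subSS subn0.
rewrite big_add1 /=; apply: eq_big_nat => k /andP [_ k_lt_M].
exact: sum_size_odd_perimeter_partitions_of_size.
Qed.

Lemma sum_even_nat (G : nat -> nat) M :
  \sum_(0 <= i < M | ~~ odd i) G i = \sum_(0 <= n < M | 2 * n < M) G (2 * n).
Proof.
have sum_uphalf N : \sum_(0 <= i < N | ~~ odd i) G i = \sum_(0 <= n < uphalf N) G (2 * n).
  elim: N => [|N IH]; first by rewrite !big_geq.
  rewrite big_mkcond big_nat_recr //= -big_mkcond IH uphalf_half.
  have := odd_double_half N; case: (odd N) => /= N_eq; first by rewrite addn0.
  rewrite add0n in N_eq.
  by rewrite big_nat_recr //= mul2n N_eq.
rewrite sum_uphalf (big_nat_widen _ _ _ _ _ (_ : uphalf M <= M)); last first.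
  by rewrite leq_uphalf_double -addnn leq_addr.
by apply: eq_bigl => n; rewrite gtn_uphalf_double mul2n.
Qed.

Lemma sum_odd_complement (F : nat -> nat) M :
  \sum_(0 <= k < M) (if odd (M - k) then F k else 0)
  = \sum_(0 <= n < M | 2 * n < M) F (M - (2 * n).+1).
Proof.
rewrite big_nat_rev -(sum_even_nat (fun i => F (M - i.+1))) [RHS]big_mkcond.
apply: (@eq_big_nat _ 0 addn) => i /andP [_ i_lt_M].
by rewrite add0n (_ : M - (M - i.+1) = i.+1) //; lia.
Qed.

Theorem mainTheorem8 (M : nat) : 1 <= M ->
  g M = \sum_(0 <= n < M | 2 * n <= M - 1) (M - 2 * n) * 'C(M - n - 1, n).
Proof.
move=> M_pos; rewrite g_sum_over_sizes sum_odd_complement.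
apply: eq_big => [n | n two_n_lt_M]; first by apply/idP/idP; lia.
have -> : M - (M - (2 * n).+1) = (2 * n).+1 by lia.
have -> : (2 * n)./2 = n by rewrite mul2n doubleK.
have -> : M - (2 * n).+1 + n = M - n - 1 by lia.
have -> : 'C(M - n - 1, M - (2 * n).+1) = 'C(M - n - 1, n).
  by rewrite (_ : M - (2 * n).+1 = M - n - 1 - n) ?bin_sub //; lia.
by congr (_ * _); lia.
Qed.
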